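(* Let ${\mathbb X}$ be a non-degenerate Ptolemaic normed space, let $M\colon[0,\infty)\times[0,\infty)\to[0,\infty)$ be symmetric and moderately increasing, and suppose $\rho_M(x,y)=\dfrac{\Vert x-y\Vert}{M(\Vert x\Vert,\Vert y\Vert)}$ is a metric on ${\mathbb X}$. Let $g\colon{\mathbb X}\to{\mathbb X}$ satisfy $g(0)=0$ and $\frac1L\Vert x-y\Vert\le\Vert g(x)-g(y)\Vert\le L\Vert x-y\Vert$ for all $x,y\in{\mathbb X}$, for some $L\ge 1$. Then $\frac1{L^3}\rho_M(x,y)\le\rho_M(g(x),g(y))\le L^3\rho_M(x,y)$ for all $x,y\in{\mathbb X}$.
   Context: A normed space ${\mathbb X}$ is Ptolemaic if $\Vert z-w\Vert\Vert x-y\Vert\le\Vert y-w\Vert\Vert x-z\Vert+\Vert x-w\Vert\Vert z-y\Vert$ for all $x,y,z,w$; non-degenerate means ${\mathbb X}\ne\{0\}$. Convention $0/0=0$; metrics may take the value $\infty$. A function $f\colon[0,\infty)\to[0,\infty)$ is moderately increasing if it is increasing and $f(t)/t$ is decreasing; a function $M$ of two variables is moderately increasing if $M(x,\cdot)$ and $M(\cdot,x)$ are moderately increasing for each fixed $x\ge 0$. *)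

From HB Require Import structures.
From mathcomp Require Import all_boot all_order all_algebra.
From mathcomp Require Import all_classical all_reals all_analysis.
Set Implicit Arguments. Unset Strict Implicit. Unset Printing Implicit Defensive.
Import Order.TTheory GRing.Theory Num.Theory.
Import numFieldNormedType.Exports.
Local Open Scope ring_scope.

Definition ptolemaic_space (R : realType) (X : normedModType R) : Prop :=
  forall x y z w : X,
    `|z - w| * `|x - y| <= `|y - w| * `|x - z| + `|x - w| * `|z - y|.

Definition nondegenerate_space (R : realType) (X : normedModType R) : Prop :=
  exists x : X, x != 0.

Definition moderately_increasing1 (R : realType) (f : R -> R) : Prop :=
  (forall s t, 0 <= s -> s <= t -> f s <= f t) /\
  (forall s t, 0 < s -> s <= t -> f t / t <= f s / s).

Definition moderately_increasing2 (R : realType) (M : R -> R -> R) : Prop :=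
  forall a, 0 <= a -> moderately_increasing1 (M a) /\
                      moderately_increasing1 (fun t => M t a).

Definition symmetric_on_nonneg (R : realType) (M : R -> R -> R) : Prop :=
  forall a b, 0 <= a -> 0 <= b -> M a b = M b a.

Definition nonneg_on_nonneg (R : realType) (M : R -> R -> R) : Prop :=
  forall a b, 0 <= a -> 0 <= b -> 0 <= M a b.

(* rho_M(x,y) = ||x-y|| / M(||x||,||y||) with 0/0 = 0 and a/0 = +oo (a > 0). *)
Definition rhoM (R : realType) (X : normedModType R) (M : R -> R -> R)
    (x y : X) : \bar R :=
  if M `|x| `|y| == 0 then (if x == y then 0%E else +oo%E)
  else (`|x - y| / M `|x| `|y|)%:E.

Definition is_emetric (T : Type) (R : realType) (d : T -> T -> \bar R) : Prop :=
  (forall x y, d x y = 0%E <-> x = y) /\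
  (forall x y, d x y = d y x) /\
  (forall x y z, (d x z <= d x y + d y z)%E).

From HB Require Import structures.
From mathcomp Require Import all_boot all_order all_algebra.
From mathcomp Require Import all_classical all_reals all_analysis.
From mathcomp Require Import ring lra.
Set Implicit Arguments. Unset Strict Implicit. Unset Printing Implicit Defensive.
Import Order.TTheory GRing.Theory Num.Theory.
Import numFieldNormedType.Exports.
Local Open Scope ring_scope.

(* Since g 0 = 0, the bi-Lipschitz bounds make ||g x|| and ||x|| comparable
   up to the factor L.  A moderately increasing function changes by at most
   a factor c >= 1 when its argument does, so M(||g x||, ||g y||) and
   M(||x||, ||y||) are comparable up to L^2, one factor per variable; the
   numerators ||g x - g y|| and ||x - y|| contribute the third factor L. *)

Lemma moderately_increasing1_scale (R : realType) (f : R -> R) (c a b : R) :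
  moderately_increasing1 f -> (forall t, 0 <= t -> 0 <= f t) ->
  1 <= c -> 0 <= a -> 0 <= b -> b <= c * a -> f b <= c * f a.
Proof.
move=> [f_incr f_ratio_decr] f_ge0 c_ge1 a_ge0 b_ge0 b_le.
have fa_ge0 := f_ge0 a a_ge0.
have [b_le_a|a_lt_b] := leP b a.
  by apply: (le_trans (f_incr _ _ b_ge0 b_le_a)); rewrite ler_peMl.
have a_gt0 : 0 < a by nra.
have b_gt0 : 0 < b by lra.
have := f_ratio_decr _ _ a_gt0 (ltW a_lt_b).
rewrite ler_pdivrMr // mulrAC ler_pdivlMr // => fb_le.
rewrite -(ler_pM2r a_gt0) -mulrA; apply: (le_trans fb_le).
by rewrite mulrCA ler_wpM2l.
Qed.

Section RhoMScale.
Variables (R : realType) (X : normedModType R) (M : R -> R -> R).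
Hypothesis M_ge0 : nonneg_on_nonneg M.

Lemma moderately_increasing2_scale (c a b a' b' : R) :
  moderately_increasing2 M -> 1 <= c -> 0 <= a -> 0 <= b -> 0 <= a' -> 0 <= b' ->
  a' <= c * a -> b' <= c * b -> M a' b' <= c ^+ 2 * M a b.
Proof.
move=> M_mi c_ge1 a_ge0 b_ge0 a'_ge0 b'_ge0 a'_le b'_le.
have [_ M_mi1] := M_mi _ b'_ge0.
have [M_mi2 _] := M_mi _ a_ge0.
have first_var : M a' b' <= c * M a b' :=
  moderately_increasing1_scale M_mi1 (fun t t_ge0 => M_ge0 t_ge0 b'_ge0)
    c_ge1 a_ge0 a'_ge0 a'_le.
have second_var : M a b' <= c * M a b :=
  moderately_increasing1_scale M_mi2 (fun t t_ge0 => M_ge0 a_ge0 t_ge0)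
    c_ge1 b_ge0 b'_ge0 b'_le.
rewrite expr2 -mulrA; apply: (le_trans first_var).
by rewrite ler_wpM2l // (le_trans ler01).
Qed.

Lemma rhoM_ge0 (x y : X) : (0 <= rhoM M x y)%E.
Proof.
rewrite /rhoM; case: ifP => _; first by case: ifP.
by rewrite lee_fin divr_ge0 // M_ge0.
Qed.

Lemma rhoMxx (x : X) : rhoM M x x = 0%E.
Proof. by rewrite /rhoM eqxx subrr normr0 mul0r; case: ifP. Qed.

Lemma rhoM_scale (c : R) (x y x' y' : X) :
  0 < c -> `|x - y| <= c * `|x' - y'| ->
  M `|x'| `|y'| <= c ^+ 2 * M `|x| `|y| ->
  (rhoM M x y <= (c ^+ 3)%:E * rhoM M x' y')%E.
Proof.
move=> c_gt0 dist_le M_le.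
have c3_gt0 : 0 < c ^+ 3 by rewrite exprn_gt0.
have [->|xy_neq] := eqVneq x y.
  by rewrite rhoMxx; apply: mule_ge0; [apply/ltW; rewrite lte_fin | exact: rhoM_ge0].
have x'y'_neq : x' != y'.
  move: xy_neq; apply: contra_neq => x'y'_eq; apply/eqP; rewrite -subr_eq0 -normr_le0.
  by rewrite x'y'_eq subrr normr0 mulr0 in dist_le.
rewrite /rhoM (negbTE xy_neq) (negbTE x'y'_neq).
have [_|m'_neq0] := eqVneq (M `|x'| `|y'|) 0.
  by rewrite mulry gtr0_sg // mul1e leey.
have m'_gt0 : 0 < M `|x'| `|y'| by rewrite lt0r m'_neq0 M_ge0.
have m_gt0 : 0 < M `|x| `|y|.
  by rewrite -(pmulr_rgt0 _ (exprn_gt0 2 c_gt0)); apply: lt_le_trans M_le.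
rewrite gt_eqF // -EFinM lee_fin.
have inv_m_le : (M `|x| `|y|)^-1 <= c ^+ 2 / M `|x'| `|y'|.
  by rewrite ler_pdivlMr // mulrC ler_pdivrMr.
have -> : c ^+ 3 * (`|x' - y'| / M `|x'| `|y'|)
          = (c * `|x' - y'|) * (c ^+ 2 / M `|x'| `|y'|).
  by rewrite exprSr; field.
by apply: ler_pM; rewrite ?invr_ge0 ?(ltW m_gt0).
Qed.

End RhoMScale.

Lemma bilipschitz_dist (R : realType) (X : normedModType R) (g : X -> X) (L : R) :
  0 < L ->
  (forall x y, L^-1 * `|x - y| <= `|g x - g y| /\ `|g x - g y| <= L * `|x - y|) ->
  forall x y, `|x - y| <= L * `|g x - g y| /\ `|g x - g y| <= L * `|x - y|.
Proof.
move=> L_gt0 g_bilip x y; have [lower_le upper_le] := g_bilip x y.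
by split=> //; rewrite -ler_pdivrMl.
Qed.

Theorem lemma2p1 (R : realType) (X : normedModType R) (M : R -> R -> R)
  (g : X -> X) (L : R) :
  ptolemaic_space X -> nondegenerate_space X ->
  nonneg_on_nonneg M -> symmetric_on_nonneg M -> moderately_increasing2 M ->
  is_emetric (@rhoM R X M) ->
  g 0 = 0 -> 1 <= L ->
  (forall x y, L^-1 * `|x - y| <= `|g x - g y| /\ `|g x - g y| <= L * `|x - y|) ->
  forall x y : X,
    ((L ^+ 3)^-1%:E * rhoM M x y <= rhoM M (g x) (g y))%E /\
    (rhoM M (g x) (g y) <= (L ^+ 3)%:E * rhoM M x y)%E.
Proof.
move=> _ _ M_ge0 _ M_mi _ g0 L_ge1 g_bilip x y.
have L_gt0 : 0 < L by apply: lt_le_trans L_ge1.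
have dist_le := bilipschitz_dist L_gt0 g_bilip.
have norm_le z : `|z| <= L * `|g z| /\ `|g z| <= L * `|z|.
  by have := dist_le z 0; rewrite g0 !subr0.
have [x_le gx_le] := norm_le x; have [y_le gy_le] := norm_le y.
have [dxy_le dgxy_le] := dist_le x y.
split; last by apply: rhoM_scale => //; exact: moderately_increasing2_scale.
rewrite lee_pdivrMl ?exprn_gt0 //; apply: rhoM_scale => //.
exact: moderately_increasing2_scale.
Qed.
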